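(* Let $\mathcal{L}$ be a family of linear algebraic laws involving a single binary operation symbol. Then $\mathcal{G}(\mathcal{L})$ does not contain the empty operator, every element of $\mathcal{G}(\mathcal{L})$ admits a seed, and every seed of an element of $\mathcal{G}(\mathcal{L})$ is a pair of injective terms.
   Context: Terms are built from an infinite set of variables with one binary operation symbol $*$; addresses are finite sequences over $\{0,1\}$ ($0$ = left, $1$ = right), $t/\alpha$ is the subterm at $\alpha$. A term is injective if no variable occurs twice in it. A law $l=r$ is linear if it is balanced (same variables on both sides) and $l$, $r$ are injective. For an oriented law $L=(l,r)$ and address $\alpha$, $O^{+}_{L,\alpha}$ is the partial map sending $t$ with $t/\alpha=l\sigma$ (for a substitution $\sigma$) to the term obtained by replacing that subterm by $r\sigma$, and $O^{-}_{L,\alpha}$ is its inverse; $\mathcal{G}(\mathcal{L})$ is the monoid of partial maps generated by these under composition. A pair of terms $(l,r)$ is a seed of a partial operator $f$ if $f$, as a set of pairs, is exactly the set of all pairs $(l\sigma,r\sigma)$ with $\sigma$ a substitution. *)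

From Stdlib Require Import List.
Import ListNotations.

Inductive term : Type :=
| Var : nat -> term
| Op : term -> term -> term.

(* Addresses: false = 0 = left, true = 1 = right. *)
Definition address := list bool.

Fixpoint subterm (t : term) (a : address) : option term :=
  match a, t with
  | [], _ => Some t
  | false :: a', Op t1 _ => subterm t1 a'
  | true :: a', Op _ t2 => subterm t2 a'
  | _ :: _, Var _ => None
  end.

Fixpoint replace (t : term) (a : address) (s : term) : option term :=
  match a, t with
  | [], _ => Some s
  | false :: a', Op t1 t2 =>
      match replace t1 a' s with Some t1' => Some (Op t1' t2) | None => None end
  | true :: a', Op t1 t2 =>
      match replace t2 a' s with Some t2' => Some (Op t1 t2') | None => None end
  | _ :: _, Var _ => None
  end.

Definition substitution := nat -> term.

Fixpoint subst (s : substitution) (t : term) : term :=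
  match t with
  | Var x => s x
  | Op t1 t2 => Op (subst s t1) (subst s t2)
  end.

Fixpoint vars (t : term) : list nat :=
  match t with
  | Var x => [x]
  | Op t1 t2 => vars t1 ++ vars t2
  end.

Definition injective_term (t : term) : Prop := NoDup (vars t).

Definition law := (term * term)%type.

Definition balanced (L : law) : Prop :=
  forall x, In x (vars (fst L)) <-> In x (vars (snd L)).

Definition linear_law (L : law) : Prop :=
  balanced L /\ injective_term (fst L) /\ injective_term (snd L).

(* Partial operators on terms, viewed as sets of pairs (graphs). *)
Definition operator := term -> term -> Prop.

Definition Oplus (L : law) (a : address) : operator :=
  fun t u => exists s : substitution,
    subterm t a = Some (subst s (fst L)) /\ replace t a (subst s (snd L)) = Some u.

Definition Ominus (L : law) (a : address) : operator :=
  fun t u => Oplus L a u t.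

Definition op_id : operator := fun t u => t = u.

(* composition: first f, then g *)
Definition op_comp (g f : operator) : operator :=
  fun t v => exists u, f t u /\ g u v.

Inductive in_G (Lfam : law -> Prop) : operator -> Prop :=
| G_id : in_G Lfam op_id
| G_plus : forall f L a, in_G Lfam f -> Lfam L -> in_G Lfam (op_comp (Oplus L a) f)
| G_minus : forall f L a, in_G Lfam f -> Lfam L -> in_G Lfam (op_comp (Ominus L a) f).

Definition empty_operator (f : operator) : Prop := forall t u, ~ f t u.

Definition seed (f : operator) (l r : term) : Prop :=
  forall t u, f t u <-> exists s : substitution, t = subst s l /\ u = subst s r.

From Stdlib Require Import List Permutation Lia Arith.
Import ListNotations.

(* Every operator of G(L) has a seed that is itself a linear law.  The identity
   has seed (x, x); O^+_{L,a} has seed (C[l], C[r]) for the context C at address a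
   whose other leaves are fresh variables, and O^- swaps this seed.  If f and g have
   linear seeds (l1, r1) and (l2, r2) with disjoint variables, then g o f has seed
   (mu l1, mu r2), where mu is a most general unifier of r1 and l2: it exists, and
   mu r1 is linear, because r1 and l2 are linear and share no variable.
   A seed (l, r) gives the pair (l, r) of the operator, so the operator is not
   empty.  Any other seed is a mutual instance of a linear one, i.e. a renaming of
   it, hence injective as well. *)

Lemma NoDup_app_iff {A : Type} (l1 l2 : list A) :
  NoDup (l1 ++ l2) <-> NoDup l1 /\ NoDup l2 /\ (forall a, In a l1 -> ~ In a l2).
Proof.
  split.
  - intros H. split; [exact (NoDup_app_remove_r _ _ H)|].
    split; [exact (NoDup_app_remove_l _ _ H)|].
    intros a Ha. apply in_split in Ha as (l1a & l1b & ->).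
    rewrite <- app_assoc in H. apply NoDup_remove_2 in H.
    intros Ha2. apply H. rewrite !in_app_iff. auto.
  - intros (H1 & H2 & H3). exact (NoDup_app H1 H2 H3).
Qed.

Lemma lt_S_list_max (l : list nat) (z : nat) : In z l -> z < S (list_max l).
Proof.
  intros Hz. pose proof (proj1 (list_max_le l (list_max l)) (le_n _)) as H.
  rewrite Forall_forall in H. specialize (H z Hz). lia.
Qed.

Definition update (s : substitution) (x : nat) (w : term) : substitution :=
  fun z => if Nat.eq_dec z x then w else s z.

Definition shift (N : nat) : substitution := fun x => Var (x + N).

Lemma subst_ext (s s' : substitution) (t : term) :
  (forall x, In x (vars t) -> s x = s' x) -> subst s t = subst s' t.
Proof.
  induction t as [x | t1 IH1 t2 IH2]; simpl; intros H.
  - apply H. now left.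
  - rewrite IH1, IH2; auto; intros x Hx; apply H, in_or_app; auto.
Qed.

Lemma subst_comp (s1 s2 : substitution) (t : term) :
  subst s1 (subst s2 t) = subst (fun x => subst s1 (s2 x)) t.
Proof. induction t; simpl; congruence. Qed.

Lemma subst_Var (t : term) : subst Var t = t.
Proof. induction t; simpl; congruence. Qed.

Lemma subst_update_notin (s : substitution) (x : nat) (w t : term) :
  ~ In x (vars t) -> subst (update s x w) t = subst s t.
Proof.
  intros Hx. apply subst_ext. intros z Hz. unfold update.
  destruct Nat.eq_dec as [-> | _]; [contradiction | reflexivity].
Qed.

Lemma vars_subst (s : substitution) (t : term) :
  vars (subst s t) = flat_map (fun x => vars (s x)) (vars t).
Proof.
  induction t as [x | t1 IH1 t2 IH2]; simpl.
  - now rewrite app_nil_r.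
  - now rewrite flat_map_app, IH1, IH2.
Qed.

Lemma Permutation_vars_subst (s : substitution) (t t' : term) :
  Permutation (vars t) (vars t') -> Permutation (vars (subst s t)) (vars (subst s t')).
Proof. intros H. rewrite !vars_subst. now apply Permutation_flat_map. Qed.

Lemma subst_fixed_vars (s : substitution) (t : term) :
  subst s t = t -> forall x, In x (vars t) -> s x = Var x.
Proof.
  induction t as [x | t1 IH1 t2 IH2]; simpl; intros H z Hz.
  - now destruct Hz as [<- | []].
  - injection H as H1 H2. apply in_app_or in Hz as [Hz | Hz]; auto.
Qed.

Lemma NoDup_vars_subst_renaming (s1 s2 : substitution) (t : term) :
  NoDup (vars t) -> (forall x, In x (vars t) -> subst s1 (s2 x) = Var x) ->
  NoDup (vars (subst s2 t)).
Proof.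
  intros Ht Hinv.
  set (g x := match s2 x with Var y => y | Op _ _ => x end).
  assert (Hg : forall x, In x (vars t) -> s2 x = Var (g x)).
  { intros x Hx. specialize (Hinv x Hx). unfold g. now destruct (s2 x). }
  assert (Hmap : vars (subst s2 t) = map g (vars t)).
  { clear -Hg. induction t as [x | t1 IH1 t2 IH2]; simpl in *.
    - rewrite Hg; auto.
    - rewrite map_app, IH1, IH2; auto; intros x Hx; apply Hg, in_or_app; auto. }
  rewrite Hmap. apply FinFun.Injective_map_NoDup_in; [|exact Ht].
  intros x y Hx Hy Hxy.
  pose proof (Hinv x Hx) as Ex. pose proof (Hinv y Hy) as Ey.
  rewrite Hg in Ex, Ey by assumption. simpl in Ex, Ey. rewrite Hxy in Ex. congruence.
Qed.

(* Without occurs check or composition of substitutions, this is a most general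
   unifier only when no variable occurs twice in p and q together. *)
Fixpoint unify (p q : term) : substitution :=
  match p, q with
  | Var x, _ => update Var x q
  | Op _ _, Var y => update Var y p
  | Op p1 p2, Op q1 q2 => fun z =>
      if in_dec Nat.eq_dec z (vars p1 ++ vars q1) then unify p1 q1 z else unify p2 q2 z
  end.

Lemma unify_mgu (p q : term) (nu : substitution) :
  subst nu p = subst nu q -> forall z, subst nu (unify p q z) = nu z.
Proof.
  revert q; induction p as [x | p1 IH1 p2 IH2]; intros q H z.
  - simpl; unfold update. destruct Nat.eq_dec as [-> | _]; auto.
  - destruct q as [y | q1 q2]; simpl.
    + unfold update. destruct Nat.eq_dec as [-> | _]; auto.
    + simpl in H. injection H as H1 H2. destruct in_dec; auto.
Qed.

Lemma vars_unify (p q : term) (w z : nat) :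
  In z (vars (unify p q w)) -> In z (vars p ++ vars q) \/ z = w.
Proof.
  revert q; induction p as [x | p1 IH1 p2 IH2]; intros q.
  - simpl; unfold update. destruct Nat.eq_dec; simpl; [auto | intros [<- | []]; auto].
  - destruct q as [y | q1 q2]; simpl.
    + unfold update. destruct Nat.eq_dec; simpl; [|intros [<- | []]]; auto.
      intros Hz. left. apply in_or_app. now left.
    + rewrite !in_app_iff. destruct in_dec.
      * intros Hz. apply IH1 in Hz. rewrite in_app_iff in Hz. tauto.
      * intros Hz. apply IH2 in Hz. rewrite in_app_iff in Hz. tauto.
Qed.

Lemma vars_subst_unify (p q : term) (z : nat) :
  In z (vars (subst (unify p q) p)) -> In z (vars p ++ vars q).
Proof.
  rewrite vars_subst, in_flat_map. intros (x & Hx & Hz).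
  apply vars_unify in Hz as [Hz | ->]; auto. apply in_or_app. now left.
Qed.

Lemma NoDup_vars_Op_split (p1 p2 q1 q2 : term) :
  NoDup (vars (Op p1 p2) ++ vars (Op q1 q2)) ->
  NoDup (vars p1 ++ vars q1) /\ NoDup (vars p2 ++ vars q2) /\
  (forall z, In z (vars p1 ++ vars q1) -> ~ In z (vars p2 ++ vars q2)).
Proof.
  intros H. apply NoDup_app_iff. simpl in H.
  refine (Permutation_NoDup _ H).
  rewrite <- !app_assoc. apply Permutation_app_head.
  rewrite !app_assoc. apply Permutation_app_tail, Permutation_app_comm.
Qed.

Lemma subst_unify_Op_l (p1 p2 q1 q2 t : term) :
  incl (vars t) (vars p1 ++ vars q1) ->
  subst (unify (Op p1 p2) (Op q1 q2)) t = subst (unify p1 q1) t.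
Proof.
  intros Ht. apply subst_ext. intros z Hz. simpl.
  destruct in_dec as [_ | Hn]; [reflexivity | contradiction (Hn (Ht z Hz))].
Qed.

Lemma subst_unify_Op_r (p1 p2 q1 q2 t : term) :
  (forall z, In z (vars t) -> ~ In z (vars p1 ++ vars q1)) ->
  subst (unify (Op p1 p2) (Op q1 q2)) t = subst (unify p2 q2) t.
Proof.
  intros Ht. apply subst_ext. intros z Hz. simpl.
  destruct in_dec as [Hi | _]; [contradiction (Ht z Hz Hi) | reflexivity].
Qed.

Lemma subst_unify_Op (p1 p2 q1 q2 : term) :
  NoDup (vars (Op p1 p2) ++ vars (Op q1 q2)) ->
  subst (unify (Op p1 p2) (Op q1 q2)) (Op p1 p2) =
    Op (subst (unify p1 q1) p1) (subst (unify p2 q2) p2) /\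
  subst (unify (Op p1 p2) (Op q1 q2)) (Op q1 q2) =
    Op (subst (unify p1 q1) q1) (subst (unify p2 q2) q2).
Proof.
  intros H. apply NoDup_vars_Op_split in H as (_ & _ & D).
  split; cbn [subst]; f_equal.
  - apply subst_unify_Op_l, incl_appl, incl_refl.
  - apply subst_unify_Op_r. intros z Hz Hz'. apply (D z Hz'), in_app_iff. now left.
  - apply subst_unify_Op_l, incl_appr, incl_refl.
  - apply subst_unify_Op_r. intros z Hz Hz'. apply (D z Hz'), in_app_iff. now right.
Qed.

Lemma unify_unifies (p q : term) :
  NoDup (vars p ++ vars q) -> subst (unify p q) p = subst (unify p q) q.
Proof.
  revert q; induction p as [x | p1 IH1 p2 IH2]; intros q H.
  - apply NoDup_cons_iff in H as [Hx _]. simpl.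
    rewrite subst_update_notin, subst_Var by assumption.
    unfold update. now destruct Nat.eq_dec.
  - destruct q as [y | q1 q2].
    + apply NoDup_app_iff in H as (_ & _ & D).
      assert (Hy : ~ In y (vars (Op p1 p2))) by (intros Hy; apply (D y Hy); now left).
      change (subst (update Var y (Op p1 p2)) (Op p1 p2) = update Var y (Op p1 p2) y).
      rewrite subst_update_notin, subst_Var by assumption.
      unfold update. now destruct Nat.eq_dec.
    + destruct (subst_unify_Op p1 p2 q1 q2 H) as [-> ->].
      apply NoDup_vars_Op_split in H as (H1 & H2 & _).
      now rewrite IH1, IH2.
Qed.

Lemma unify_linear (p q : term) :
  NoDup (vars p ++ vars q) -> NoDup (vars (subst (unify p q) p)).
Proof.
  revert q; induction p as [x | p1 IH1 p2 IH2]; intros q H.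
  - apply NoDup_cons_iff in H as [_ Hq]. simpl. unfold update.
    now destruct Nat.eq_dec.
  - destruct q as [y | q1 q2].
    + apply NoDup_app_iff in H as (Hp & _ & D).
      assert (Hy : ~ In y (vars (Op p1 p2))) by (intros Hy; apply (D y Hy); now left).
      change (NoDup (vars (subst (update Var y (Op p1 p2)) (Op p1 p2)))).
      now rewrite subst_update_notin, subst_Var.
    + destruct (subst_unify_Op p1 p2 q1 q2 H) as [-> _].
      apply NoDup_vars_Op_split in H as (H1 & H2 & D).
      apply NoDup_app; auto.
      intros z Z1 Z2. apply (D z).
      * exact (vars_subst_unify p1 q1 z Z1).
      * exact (vars_subst_unify p2 q2 z Z2).
Qed.

Definition instances (l r : term) : operator :=
  fun t u => exists s, t = subst s l /\ u = subst s r.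

Definition has_linear_seed (f : operator) : Prop :=
  exists l r, seed f l r /\ linear_law (l, r).

Lemma seed_self (f : operator) (l r : term) : seed f l r -> f l r.
Proof. intros H. apply H. exists Var. now rewrite !subst_Var. Qed.

Lemma seed_converse (f : operator) (l r : term) :
  seed f l r -> seed (fun t u => f u t) r l.
Proof.
  intros H t u. rewrite (H u t).
  split; intros (s & Hu & Ht); exists s; auto.
Qed.

Lemma seed_shift (f : operator) (l r : term) (N : nat) :
  seed f l r -> seed f (subst (shift N) l) (subst (shift N) r).
Proof.
  intros H t u. rewrite (H t u). unfold shift. split; intros (s & -> & ->).
  - exists (fun y => s (y - N)). rewrite !subst_comp.
    split; apply subst_ext; intros x _; simpl; now rewrite Nat.add_sub.
  - exists (fun x => s (x + N)). now rewrite !subst_comp.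
Qed.

Lemma seed_injective (f : operator) (l r l' r' : term) :
  seed f l r -> seed f l' r' -> injective_term l' -> injective_term r' ->
  injective_term l /\ injective_term r.
Proof.
  intros H H' Hl' Hr'.
  destruct (proj1 (H' l r) (seed_self f l r H)) as (s2 & El & Er).
  destruct (proj1 (H l' r') (seed_self f l' r' H')) as (s1 & El' & Er').
  assert (Hfix : forall t, t = subst s1 (subst s2 t) -> forall x, In x (vars t) ->
            subst s1 (s2 x) = Var x).
  { intros t Ht. rewrite subst_comp in Ht. now apply subst_fixed_vars. }
  unfold injective_term. rewrite El, Er. split.
  - apply NoDup_vars_subst_renaming with s1; [exact Hl'|]. apply Hfix. congruence.
  - apply NoDup_vars_subst_renaming with s1; [exact Hr'|]. apply Hfix. congruence.
Qed.

Lemma linear_law_Permutation (l r : term) :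
  linear_law (l, r) <-> NoDup (vars l) /\ Permutation (vars l) (vars r).
Proof.
  unfold linear_law, balanced, injective_term; simpl. split.
  - intros (Hb & Hl & Hr). split; [exact Hl|]. now apply NoDup_Permutation.
  - intros (Hl & Hp). split; [|split; [exact Hl | exact (Permutation_NoDup Hp Hl)]].
    intros x. split; apply Permutation_in; [exact Hp | now symmetry].
Qed.

Lemma linear_law_converse (l r : term) : linear_law (l, r) -> linear_law (r, l).
Proof.
  unfold linear_law, balanced; simpl. intros (Hb & Hl & Hr).
  split; [|split; assumption]. intros x. now rewrite Hb.
Qed.

Lemma linear_law_shift (l r : term) (N : nat) :
  linear_law (l, r) -> linear_law (subst (shift N) l, subst (shift N) r).
Proof.
  rewrite !linear_law_Permutation. intros (Hl & Hp). split.
  - apply NoDup_vars_subst_renaming with (fun y => Var (y - N)); [exact Hl|].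
    intros x _. simpl. now rewrite Nat.add_sub.
  - now apply Permutation_vars_subst.
Qed.

Lemma vars_shift (N : nat) (t : term) (z : nat) :
  In z (vars (subst (shift N) t)) -> N <= z.
Proof.
  rewrite vars_subst, in_flat_map. intros (x & _ & [<- | []]). lia.
Qed.

Section Composition.

Variables (f g : operator) (l1 r1 l2 r2 : term).
Hypotheses (Hf : seed f l1 r1) (Hg : seed g l2 r2).
Hypotheses (Hlin1 : linear_law (l1, r1)) (Hlin2 : linear_law (l2, r2)).
Hypothesis Hapart : forall z, In z (vars l1 ++ vars r1) -> ~ In z (vars l2 ++ vars r2).

Lemma NoDup_vars_r1_l2 : NoDup (vars r1 ++ vars l2).
Proof.
  destruct Hlin1 as (_ & _ & Hr1), Hlin2 as (_ & Hl2 & _).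
  apply NoDup_app; [exact Hr1 | exact Hl2|].
  intros z Z1 Z2. apply (Hapart z); apply in_or_app; auto.
Qed.

(* A step u = r1 s = l2 tau of the composite glues s and tau into one unifier of
   r1 and l2, which factors through the most general one. *)
Lemma seed_comp : seed (op_comp g f) (subst (unify r1 l2) l1) (subst (unify r1 l2) r2).
Proof.
  set (mu := unify r1 l2).
  intros t v. split.
  - intros (u & Hfu & Hgv).
    apply Hf in Hfu as (s & -> & ->). apply Hg in Hgv as (tau & Hu & ->).
    set (nu z := if in_dec Nat.eq_dec z (vars l1 ++ vars r1) then s z else tau z).
    assert (Hnu1 : forall t, incl (vars t) (vars l1 ++ vars r1) -> subst nu t = subst s t).
    { intros t Ht. apply subst_ext. intros z Hz. unfold nu.
      destruct in_dec as [_ | Hn]; [reflexivity | contradiction (Hn (Ht z Hz))]. }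
    assert (Hnu2 : forall t, incl (vars t) (vars l2 ++ vars r2) -> subst nu t = subst tau t).
    { intros t Ht. apply subst_ext. intros z Hz. unfold nu.
      destruct in_dec as [Hi | _]; [contradiction (Hapart z Hi (Ht z Hz)) | reflexivity]. }
    assert (Hfactor : forall t, subst nu (subst mu t) = subst nu t).
    { intros t. rewrite subst_comp. apply subst_ext. intros z _. apply unify_mgu.
      rewrite Hnu1, Hnu2 by auto using incl_appl, incl_appr, incl_refl. exact Hu. }
    exists nu. rewrite !Hfactor, Hnu1, Hnu2 by auto using incl_appl, incl_appr, incl_refl.
    now split.
  - intros (th & -> & ->). exists (subst th (subst mu r1)). split.
    + apply Hf. exists (fun z => subst th (mu z)). now rewrite !subst_comp.
    + apply Hg. exists (fun z => subst th (mu z)).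
      unfold mu. rewrite unify_unifies by exact NoDup_vars_r1_l2. now rewrite !subst_comp.
Qed.

Lemma linear_law_comp : linear_law (subst (unify r1 l2) l1, subst (unify r1 l2) r2).
Proof.
  destruct (proj1 (linear_law_Permutation _ _) Hlin1) as (_ & Hp1).
  destruct (proj1 (linear_law_Permutation _ _) Hlin2) as (_ & Hp2).
  pose proof (unify_linear r1 l2 NoDup_vars_r1_l2) as Hlin.
  apply linear_law_Permutation. split.
  - exact (Permutation_NoDup (Permutation_vars_subst _ _ _ (Permutation_sym Hp1)) Hlin).
  - apply (Permutation_trans (Permutation_vars_subst _ _ _ Hp1)).
    rewrite unify_unifies by exact NoDup_vars_r1_l2. now apply Permutation_vars_subst.
Qed.

End Composition.

Lemma has_linear_seed_comp (f g : operator) :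
  has_linear_seed f -> has_linear_seed g -> has_linear_seed (op_comp g f).
Proof.
  intros (l1 & r1 & Hf & Hlin1) (l2 & r2 & Hg & Hlin2).
  set (N := S (list_max (vars l1 ++ vars r1))).
  assert (Hapart : forall z, In z (vars l1 ++ vars r1) ->
            ~ In z (vars (subst (shift N) l2) ++ vars (subst (shift N) r2))).
  { intros z Hz Hz'. apply lt_S_list_max in Hz.
    apply in_app_or in Hz' as [Hz' | Hz']; apply vars_shift in Hz'; lia. }
  pose proof (seed_shift g l2 r2 N Hg) as Hg'.
  pose proof (linear_law_shift l2 r2 N Hlin2) as Hlin2'.
  do 2 eexists. split.
  - exact (seed_comp f g l1 r1 _ _ Hf Hg' Hlin1 Hlin2' Hapart).
  - exact (linear_law_comp l1 r1 _ _ Hlin1 Hlin2' Hapart).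
Qed.

(* When all variables of [h] are below [N], the most general term having [h] at
   address [a]. *)
Fixpoint ctx (a : address) (N : nat) (h : term) : term :=
  match a with
  | [] => h
  | false :: a' => Op (ctx a' (S N) h) (Var N)
  | true :: a' => Op (Var N) (ctx a' (S N) h)
  end.

Lemma vars_ctx (a : address) (N : nat) (h : term) :
  Permutation (vars (ctx a N h)) (vars h ++ seq N (length a)).
Proof.
  revert N; induction a as [|b a IH]; intros N; simpl.
  - now rewrite app_nil_r.
  - rewrite <- Permutation_middle. destruct b; simpl.
    + apply perm_skip, IH.
    + rewrite (Permutation_app_comm _ [N]). apply perm_skip, IH.
Qed.

Lemma vars_ctx_bound (a : address) (N : nat) (h : term) (z : nat) :
  In z (vars (ctx a N h)) -> In z (vars h) \/ N <= z.
Proof.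
  intros Hz. apply (Permutation_in _ (vars_ctx a N h)), in_app_or in Hz as [Hz | Hz]; auto.
  apply in_seq in Hz. right. lia.
Qed.

Lemma Oplus_Var (L : law) (b : bool) (a : address) (x : nat) (u : term) :
  ~ Oplus L (b :: a) (Var x) u.
Proof. intros (s & H & _). now destruct b. Qed.

Lemma Oplus_Op_l (L : law) (a : address) (t1 t2 u : term) :
  Oplus L (false :: a) (Op t1 t2) u <-> exists u1, u = Op u1 t2 /\ Oplus L a t1 u1.
Proof.
  unfold Oplus; simpl. split.
  - intros (s & H1 & H2). destruct replace as [u1 |] eqn:E; [|discriminate].
    injection H2 as <-. eauto.
  - intros (u1 & -> & s & H1 & H2). exists s. now rewrite H2.
Qed.

Lemma Oplus_Op_r (L : law) (a : address) (t1 t2 u : term) :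
  Oplus L (true :: a) (Op t1 t2) u <-> exists u2, u = Op t1 u2 /\ Oplus L a t2 u2.
Proof.
  unfold Oplus; simpl. split.
  - intros (s & H1 & H2). destruct replace as [u2 |] eqn:E; [|discriminate].
    injection H2 as <-. eauto.
  - intros (u2 & -> & s & H1 & H2). exists s. now rewrite H2.
Qed.

Lemma instances_Op_fresh_l (p q : term) (x : nat) (t1 t2 u : term) :
  ~ In x (vars p) -> ~ In x (vars q) ->
  instances (Op p (Var x)) (Op q (Var x)) (Op t1 t2) u <->
  exists u1, u = Op u1 t2 /\ instances p q t1 u1.
Proof.
  intros Hp Hq. split.
  - intros (s & Ht & ->). injection Ht as -> ->. exists (subst s q). split; [easy|]. now exists s.
  - intros (u1 & -> & s & -> & ->). exists (update s x t2). simpl.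
    rewrite !subst_update_notin by assumption. unfold update.
    now destruct Nat.eq_dec.
Qed.

Lemma instances_Op_fresh_r (p q : term) (x : nat) (t1 t2 u : term) :
  ~ In x (vars p) -> ~ In x (vars q) ->
  instances (Op (Var x) p) (Op (Var x) q) (Op t1 t2) u <->
  exists u2, u = Op t1 u2 /\ instances p q t2 u2.
Proof.
  intros Hp Hq. split.
  - intros (s & Ht & ->). injection Ht as -> ->. exists (subst s q). split; [easy|]. now exists s.
  - intros (u2 & -> & s & -> & ->). exists (update s x t1). simpl.
    rewrite !subst_update_notin by assumption. unfold update.
    now destruct Nat.eq_dec.
Qed.

Lemma seed_Oplus_ctx (L : law) (a : address) (N : nat) :
  (forall z, In z (vars (fst L) ++ vars (snd L)) -> z < N) ->
  seed (Oplus L a) (ctx a N (fst L)) (ctx a N (snd L)).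
Proof.
  revert N; induction a as [|b a IH]; intros N HN t u.
  - unfold Oplus, instances.
    split; intros (s & H1 & H2); exists s; destruct t; simpl in *; split; congruence.
  - assert (Hfresh : forall h, incl (vars h) (vars (fst L) ++ vars (snd L)) ->
              ~ In N (vars (ctx a (S N) h))).
    { intros h Hh Hin. apply vars_ctx_bound in Hin as [Hin | Hin]; [|lia].
      specialize (HN N (Hh N Hin)). lia. }
    assert (IH' : forall t u, Oplus L a t u <->
              instances (ctx a (S N) (fst L)) (ctx a (S N) (snd L)) t u).
    { apply IH. intros z Hz. specialize (HN z Hz). lia. }
    destruct t as [x | t1 t2].
    { split; [now intros ?%Oplus_Var | intros (s & Hx & _)]. now destruct b. }
    change (Oplus L (b :: a) (Op t1 t2) u <->
      instances (ctx (b :: a) N (fst L)) (ctx (b :: a) N (snd L)) (Op t1 t2) u).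
    destruct b; cbn [ctx].
    + rewrite Oplus_Op_r, instances_Op_fresh_r by auto using incl_appl, incl_appr, incl_refl.
      split; intros (u2 & -> & H); exists u2; split; auto; now apply IH'.
    + rewrite Oplus_Op_l, instances_Op_fresh_l by auto using incl_appl, incl_appr, incl_refl.
      split; intros (u1 & -> & H); exists u1; split; auto; now apply IH'.
Qed.

Lemma has_linear_seed_Oplus (L : law) (a : address) :
  linear_law L -> has_linear_seed (Oplus L a).
Proof.
  destruct L as [l r]. rewrite linear_law_Permutation. intros (Hl & Hp).
  set (N := S (list_max (vars l ++ vars r))).
  exists (ctx a N l), (ctx a N r). split.
  - apply seed_Oplus_ctx. intros z. apply lt_S_list_max.
  - apply linear_law_Permutation. split.
    + refine (Permutation_NoDup (Permutation_sym (vars_ctx a N l)) _).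
      apply NoDup_app; [exact Hl | apply seq_NoDup|].
      intros z Hz Hz'. apply in_seq in Hz'.
      assert (z < N) by (apply lt_S_list_max, in_or_app; auto). lia.
    + rewrite !vars_ctx. now apply Permutation_app_tail.
Qed.

Lemma has_linear_seed_Ominus (L : law) (a : address) :
  linear_law L -> has_linear_seed (Ominus L a).
Proof.
  intros HL. destruct (has_linear_seed_Oplus L a HL) as (l & r & Hs & Hlr).
  exists r, l. split; [exact (seed_converse _ _ _ Hs) | exact (linear_law_converse _ _ Hlr)].
Qed.

Lemma has_linear_seed_id : has_linear_seed op_id.
Proof.
  exists (Var 0), (Var 0). split.
  - intros t u. unfold op_id. split.
    + intros ->. now exists (fun _ => u).
    + now intros (s & -> & ->).
  - apply linear_law_Permutation. split; [repeat constructor; easy | reflexivity].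
Qed.

Lemma in_G_has_linear_seed (Lfam : law -> Prop) (f : operator) :
  (forall L, Lfam L -> linear_law L) -> in_G Lfam f -> has_linear_seed f.
Proof.
  intros Hlin. induction 1 as [| f L a _ IH HL | f L a _ IH HL].
  - exact has_linear_seed_id.
  - exact (has_linear_seed_comp _ _ IH (has_linear_seed_Oplus L a (Hlin L HL))).
  - exact (has_linear_seed_comp _ _ IH (has_linear_seed_Ominus L a (Hlin L HL))).
Qed.

Theorem lemma2p5 (Lfam : law -> Prop)
  (Hlin : forall L, Lfam L -> linear_law L) :
  forall f : operator, in_G Lfam f ->
    ~ empty_operator f /\
    (exists l r, seed f l r) /\
    (forall l r, seed f l r -> injective_term l /\ injective_term r).
Proof.
  intros f Hf.
  destruct (in_G_has_linear_seed Lfam f Hlin Hf) as (l & r & Hs & _ & Hl & Hr).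
  split; [|split].
  - intros Hempty. exact (Hempty l r (seed_self f l r Hs)).
  - now exists l, r.
  - intros l' r' Hs'. exact (seed_injective f l' r' l r Hs' Hs Hl Hr).
Qed.
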